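(* Any routing labeling scheme for rooted trees on $n$ nodes needs labels of length $\log n+\Omega(\log\log n)$ bits. This holds even when restricted to the family of rooted trees on $n$ nodes in which every node has at most $2$ children. Precisely: there is a constant $c>0$ such that for all sufficiently large $n$, every routing labeling scheme for that family assigns, to some node of some tree in the family, a label of length at least $\log n+c\log\log n$.
   Context: All logarithms are base $2$. A (designer-port) routing labeling scheme for a family $\mathcal{T}$ of rooted trees consists of an encoder and a decoder. - The encoder is given $T\in\mathcal{T}$. It assigns a binary string (label) $\ell(u)$ to every node $u$. It also labels the edges from each node $u$ to its $\deg(u)$ children with distinct port numbers from $\{1,\dots,\deg(u)\}$; the encoder is free to choose these port numbers. - The decoder receives only $\ell(u)$ and $\ell(w)$ for nodes $u\neq w$ of some $T\in\mathcal{T}$; the value $\lceil\log n\rceil$, where $n=|T|$, may also be assumed known. It must return $0$ if the next node on the path from $u$ to $w$ is the parent of $u$. Otherwise it must return the port number of the first edge on that path. - The length of the scheme is the maximum label length over all trees in $\mathcal{T}$ and all their nodes. *)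

From mathcomp Require Import all_boot.
From Stdlib Require Import Reals.

Set Implicit Arguments.
Unset Strict Implicit.
Unset Printing Implicit Defensive.

Definition log2 (x : R) : R := (ln x / ln 2)%R.

(* A rooted tree on the node set 'I_n: a root and a parent function, the root
   being its own parent, such that every node reaches the root by iterating
   the parent map (so there are no other cycles). *)
Record rtree (n : nat) := RTree {
  rt_root : 'I_n;
  rt_par : 'I_n -> 'I_n;
  rt_par_root : rt_par rt_root = rt_root;
  rt_reach : forall v : 'I_n, exists k, iter k rt_par v = rt_root
}.

Definition is_child n (T : rtree n) (u v : 'I_n) : bool :=
  (v != rt_root T) && (rt_par T v == u).

Definition ndeg n (T : rtree n) (u : 'I_n) : nat := #|[pred v | is_child T u v]|.

Definition binary_tree n (T : rtree n) : Prop := forall u, ndeg T u <= 2.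

Definition in_subtree n (T : rtree n) (u w : 'I_n) : Prop :=
  exists k, iter k (rt_par T) w = u.

(* A port assignment gives, for every non-root node v, the port number of the
   edge from parent v to v.  Valid: the ports of the children of each u are
   distinct and lie in {1, ..., deg(u)}. *)
Definition valid_ports n (T : rtree n) (port : 'I_n -> nat) : Prop :=
  (forall v, v != rt_root T -> 0 < port v <= ndeg T (rt_par T v)) /\
  (forall v v', v != rt_root T -> v' != rt_root T ->
     rt_par T v = rt_par T v' -> port v = port v' -> v = v').

Definition routing_correct n (T : rtree n) (lab : 'I_n -> seq bool)
    (port : 'I_n -> nat) (dec : seq bool -> seq bool -> nat) : Prop :=
  forall u w : 'I_n, u != w ->
    (in_subtree T u w ->
       exists c, is_child T u c /\ in_subtree T c w /\ dec (lab u) (lab w) = port c) /\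
    (~ in_subtree T u w -> dec (lab u) (lab w) = 0).

(* A (designer-port) routing labeling scheme for n-node trees: an encoder
   (labels and ports for each tree) and a decoder.  The decoder may depend on
   n (hence on ceil(log n)). *)
Record scheme (n : nat) := Scheme {
  enc_lab : rtree n -> 'I_n -> seq bool;
  enc_port : rtree n -> 'I_n -> nat;
  dec : seq bool -> seq bool -> nat
}.

Definition binary_routing_scheme n (S : scheme n) : Prop :=
  forall T : rtree n, binary_tree T ->
    valid_ports T (enc_port S T) /\
    routing_correct T (enc_lab S T) (enc_port S T) (dec S).

(* The witnesses are the binary "comb" trees on {0, ..., n-1}: a spine
   0 - 1 - ... - (k-1) with a tooth r, r + k, r + 2k, ... hanging below each
   spine node r.  For tooth nodes u <> w the decoder answers a nonzero port on
   (l(u), l(w)) or on (l(w), l(u)) exactly when u = w (mod k).  So in the comb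
   with spine k the n - k tooth labels are distinct, and the symmetric relation
   "the decoder routes downwards between them" is an equivalence on them with
   classes of size at most n/k.  A set of labels shared by the combs with spines
   k < k' splits into at most k cliques of that relation, each of size at most
   n/k'.  With k_j = 16^j for j <= t ~ (log n)/4 the label sets of the t combs
   thus overlap so little that their union has at least t n/2 elements; since
   there are fewer than 2^(L+1) strings of length at most L, this gives
   2^L > t n/4, i.e. L >= log n + log log n - O(1). *)

From mathcomp Require Import all_boot zify.
From Stdlib Require Import Reals Lra.
(* Importing Reals rebinds [_ ^ _] on nat to [Nat.pow]; restore ssrnat's [expn]. *)
Import ssrnat.

Set Implicit Arguments.
Unset Strict Implicit.
Unset Printing Implicit Defensive.

Section CombTree.

Variables (n k : nat) (n_gt0 : 0 < n) (k_gt0 : 0 < k).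

Definition comb_parn (v : nat) : nat := if v < k then v.-1 else v - k.

Lemma comb_parn_le v : comb_parn v <= v.
Proof. by rewrite /comb_parn; case: ifP => _; lia. Qed.

Definition comb_par (v : 'I_n) : 'I_n :=
  Ordinal (leq_ltn_trans (comb_parn_le v) (ltn_ord v)).

Definition comb_root : 'I_n := Ordinal n_gt0.

Lemma comb_par_root : comb_par comb_root = comb_root.
Proof. by apply: val_inj; rewrite /= /comb_parn k_gt0. Qed.

Lemma comb_iter_le m (v : 'I_n) : iter m comb_par v <= v - m.
Proof.
elim: m => [|m IH] /=; first by rewrite subn0.
move: IH; rewrite /comb_parn; case: ifP => _; lia.
Qed.

Lemma comb_reach (v : 'I_n) : exists m, iter m comb_par v = comb_root.
Proof. by exists v; apply: val_inj; have := comb_iter_le v v; rewrite /=; lia. Qed.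

Definition comb_tree : rtree n := RTree comb_par_root comb_reach.

Lemma comb_tree_binary : binary_tree comb_tree.
Proof.
move=> u; rewrite /ndeg -card_bool.
apply: (@leq_card_in _ _ (fun v : 'I_n => k <= v)) => v w.
rewrite !inE /is_child /= => /andP [v_nroot /eqP <-] /andP [w_nroot /eqP] /(congr1 val).
have v_gt0 : 0 < v by rewrite lt0n; apply: contra v_nroot => /eqP v0; apply/eqP/val_inj.
have w_gt0 : 0 < w by rewrite lt0n; apply: contra w_nroot => /eqP w0; apply/eqP/val_inj.
move=> /= par_vw k_vw; apply: val_inj; move: par_vw k_vw; rewrite /comb_parn.
by case: (ltnP w k); case: (ltnP v k) => //= *; lia.
Qed.

Lemma comb_iter_val m (w : 'I_n) : k * m <= w -> iter m comb_par w = w - k * m :> nat.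
Proof.
elim: m => [|m IH] le_km; first by rewrite muln0 subn0.
move: le_km; rewrite mulnS => le_km.
by rewrite /= IH /comb_parn; [case: ifP | ]; lia.
Qed.

Lemma comb_iter_tooth m (w : 'I_n) : k <= iter m comb_par w -> k * m.+1 <= w.
Proof.
rewrite mulnS; elim: m => [|m IH] /=; first by lia.
rewrite mulnS; move: IH; set x := iter m comb_par w; rewrite /comb_parn.
case: ltnP => [|k_le_x /(_ isT) le_kkm]; first by lia.
by have := @comb_iter_val m w; rewrite -/x; lia.
Qed.

Lemma comb_subtreeE (u w : 'I_n) :
  k <= u -> in_subtree comb_tree u w <-> (u <= w) && (u %% k == w %% k).
Proof.
move=> k_le_u; split=> [[m iter_wu] | /andP [le_uw eq_mod]].
  have le_km : k * m <= w by have := @comb_iter_tooth m w; rewrite iter_wu; lia.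
  have := comb_iter_val le_km; rewrite /= iter_wu => ->.
  by rewrite leq_subr eq_sym -{1}(subnK le_km) -modnDmr modnMr addn0 eqxx.
have dvd_k : k %| w - u by rewrite -eqn_mod_dvd // eq_sym.
exists ((w - u) %/ k); apply: val_inj.
by rewrite /= comb_iter_val mulnC divnK //; lia.
Qed.

End CombTree.

Lemma routing_dec_neq0 n (T : rtree n) lab port dec (u w : 'I_n) :
  valid_ports T port -> routing_correct T lab port dec -> u != w ->
  in_subtree T u w -> dec (lab u) (lab w) != 0.
Proof.
move=> [port_pos _] routing_ok neq_uw sub_uw.
have [c [/andP [c_nroot _] [_ ->]]] := (routing_ok u w neq_uw).1 sub_uw.
by have /andP [] := port_pos c c_nroot; rewrite -lt0n.
Qed.

Lemma routing_dec_eq0 n (T : rtree n) lab port dec (u w : 'I_n) :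
  routing_correct T lab port dec -> u != w ->
  ~ in_subtree T u w -> dec (lab u) (lab w) = 0.
Proof. by move=> routing_ok neq_uw; apply: (routing_ok u w neq_uw).2. Qed.

Definition teeth n k : {set 'I_n} := [set u : 'I_n | k <= u].

Lemma teeth_residue_mate n k (u : 'I_n) : 0 < k -> 3 * k <= n ->
  u \in teeth n k -> exists2 x : 'I_n, x \in teeth n k & (x != u) && (x %% k == u %% k).
Proof.
rewrite inE => k_gt0 le_3k_n k_le_u; have u_lt_n := ltn_ord u.
have [le_2k_u | lt_u_2k] := leqP (2 * k) u.
  have lt_n : u - k < n by lia.
  exists (Ordinal lt_n); rewrite ?inE /=; first lia.
  rewrite -val_eqE /= -{4}(subnK (_ : k <= u)); last lia.
  by rewrite modnDr eqxx andbT; apply/eqP; lia.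
have lt_n : u + k < n by lia.
exists (Ordinal lt_n); rewrite ?inE /=; first lia.
by rewrite -val_eqE /= modnDr eqxx andbT; apply/eqP; lia.
Qed.

Definition linked (dec : seq bool -> seq bool -> nat) (s t : seq bool) : bool :=
  (dec s t != 0) || (dec t s != 0).

Section CombRouting.

Variables (n k : nat) (n_gt0 : 0 < n) (k_gt0 : 0 < k).
Variables (lab : 'I_n -> seq bool) (port : 'I_n -> nat).
Variable dec : seq bool -> seq bool -> nat.
Hypothesis ports_ok : valid_ports (comb_tree n_gt0 k_gt0) port.
Hypothesis routing_ok : routing_correct (comb_tree n_gt0 k_gt0) lab port dec.

Lemma comb_dec_neq0 (u w : 'I_n) : u \in teeth n k -> u != w ->
  (dec (lab u) (lab w) != 0) = (u <= w) && (u %% k == w %% k).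
Proof.
rewrite inE => k_le_u neq_uw.
case sub_uw: ((u <= w) && (u %% k == w %% k)).
  by apply: routing_dec_neq0 ports_ok routing_ok neq_uw _; apply/comb_subtreeE.
by rewrite (routing_dec_eq0 routing_ok neq_uw) // comb_subtreeE // sub_uw.
Qed.

Lemma comb_linkedE (u w : 'I_n) : u \in teeth n k -> w \in teeth n k -> u != w ->
  linked dec (lab u) (lab w) = (u %% k == w %% k).
Proof.
move=> tu tw neq_uw; have neq_wu : w != u by rewrite eq_sym.
rewrite /linked !comb_dec_neq0 // [w %% k == _]eq_sym.
by case: (u %% k == w %% k); rewrite ?andbT ?andbF ?leq_total.
Qed.

Lemma comb_lab_inj : 3 * k <= n -> {in teeth n k &, injective lab}.
Proof.
move=> le_3k_n u w tu tw eq_lab; apply/eqP/negPn/negP => neq_uw.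
have neq_wu : w != u by rewrite eq_sym.
case eq_mod: (u %% k == w %% k).
  have := comb_dec_neq0 tu neq_uw; have := comb_dec_neq0 tw neq_wu.
  rewrite eq_lab [w %% k == _]eq_sym eq_mod !andbT => ->.
  by move: neq_uw; rewrite -val_eqE /=; case: ltngtP.
have [x tx /andP [neq_xu eq_xu]] := teeth_residue_mate k_gt0 le_3k_n tu.
have neq_xw : x != w by apply: contraFN eq_mod => /eqP <-; rewrite eq_sym.
have := comb_linkedE tx tw neq_xw.
by rewrite -eq_lab comb_linkedE // eq_xu (eqP eq_xu) eq_mod.
Qed.

End CombRouting.

Lemma card_bigcup_le (I T : finType) (r : seq I) (P : pred I) (F : I -> {set T}) :
  #|\bigcup_(i <- r | P i) F i| <= \sum_(i <- r | P i) #|F i|.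
Proof.
apply: (big_ind2 (fun (A : {set T}) m => #|A| <= m)) => [|A m B l le_A le_B|//].
  by rewrite cards0.
exact: leq_trans (leq_card_setU A B) (leq_add le_A le_B).
Qed.

Lemma leq_card_in_bounded n (A : {pred 'I_n}) (f : 'I_n -> nat) m :
  {in A &, injective f} -> {in A, forall u, f u < m} -> #|A| <= m.
Proof.
move=> f_inj f_lt; rewrite cardE -(size_map f) -(size_iota 0 m).
apply: uniq_leq_size => [|y /mapP [u]].
  by rewrite map_inj_in_uniq ?enum_uniq // => u w; rewrite !mem_enum; apply: f_inj.
by rewrite mem_enum => /f_lt lt_fu ->; rewrite mem_iota.
Qed.

Lemma card_teeth n k : n - k <= #|teeth n k|.
Proof.
have := cardsC (teeth n k); rewrite card_ord.
have : #|~: teeth n k| <= k.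
  apply: (@leq_card_in_bounded _ _ val) => [u w _ _ /val_inj // | u].
  by rewrite !inE -ltnNge.
lia.
Qed.

Lemma card_teeth_residue n k r : 0 < k ->
  #|[set u in teeth n k | u %% k == r]| <= n %/ k.
Proof.
move=> k_gt0; apply: (@leq_card_in_bounded _ _ (fun u => u %/ k - 1)) => [u w | u].
  rewrite !inE => /andP [k_le_u /eqP ru] /andP [k_le_w /eqP rw] eq_div.
  have u_gt0 : 0 < u %/ k by rewrite divn_gt0.
  have w_gt0 : 0 < w %/ k by rewrite divn_gt0.
  apply: val_inj; rewrite /= (divn_eq u k) (divn_eq w k) ru rw.
  by have -> : u %/ k = w %/ k by lia.
rewrite !inE => /andP [k_le_u _].
have u_gt0 : 0 < u %/ k by rewrite divn_gt0.
have := leq_div2r k (ltnW (ltn_ord u)); lia.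
Qed.

Definition residue_coding (B : finType) n k (g : 'I_n -> B) (R : rel B) : Prop :=
  {in teeth n k &, forall u w, u != w -> R (g u) (g w) = (u %% k == w %% k)}.

Lemma residue_coding_clique (B : finType) n k (g : 'I_n -> B) (R : rel B) (C : {set B}) :
  0 < k -> residue_coding k g R -> C \subset g @: teeth n k ->
  {in C &, forall a b, a != b -> R a b} -> #|C| <= n %/ k.
Proof.
move=> k_gt0 gR sub_C clique_C.
have [-> | [a0 Ca0]] := set_0Vmem C; first by rewrite cards0.
have /imsetP [u0 tu0 def_a0] := subsetP sub_C a0 Ca0; rewrite {a0}def_a0 in Ca0.
apply: leq_trans (card_teeth_residue n (u0 %% k) k_gt0).
apply: leq_trans (leq_imset_card g _); apply/subset_leq_card/subsetP => a Ca.
have /imsetP [u tu def_a] := subsetP sub_C a Ca; rewrite {a}def_a in Ca *.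
have [-> | neq_g] := eqVneq (g u) (g u0); first by rewrite imset_f // inE tu0 /=.
apply: imset_f; rewrite inE tu -gR ?clique_C //.
by apply: contra_neq neq_g => ->.
Qed.

Lemma residue_coding_meet (B : finType) n k1 k2 (g1 g2 : 'I_n -> B) (R : rel B) :
  0 < k1 -> 0 < k2 -> residue_coding k1 g1 R -> residue_coding k2 g2 R ->
  #|g1 @: teeth n k1 :&: g2 @: teeth n k2| <= k1 * (n %/ k2).
Proof.
move=> k1_gt0 k2_gt0 g1R g2R; set I := _ :&: _.
pose part r := I :&: g1 @: [set u in teeth n k1 | u %% k1 == r].
have cover_I : I \subset \bigcup_(r < k1) part r.
  apply/subsetP => a /[dup] Ia /setIP [/imsetP [u tu def_a] _].
  apply/bigcupP; exists (Ordinal (ltn_pmod u k1_gt0)) => //.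
  by rewrite inE Ia def_a imset_f // inE tu /=.
apply: leq_trans (subset_leq_card cover_I) _; apply: leq_trans (card_bigcup_le _ _ _) _.
rewrite -[X in X * _]card_ord -sum_nat_const; apply: leq_sum => r _.
apply: residue_coding_clique k2_gt0 g2R _ _.
  exact: subset_trans (subsetIl _ _) (subsetIr _ _).
move=> a b /setIP [_ /imsetP [u /setIdP [tu /eqP ru] ->]].
move=> /setIP [_ /imsetP [w /setIdP [tw /eqP rw] ->]] neq_g.
by rewrite g1R ?ru ?rw //; apply: contra_neq neq_g => ->.
Qed.

Lemma sum_div_pow16 j m : 15 * \sum_(i < j) m %/ 16 ^ (j - i) <= m.
Proof.
elim: j m => [|j IH] m; first by rewrite big_ord0.
rewrite big_ord_recr /= subSnn expn1.
have -> : \sum_(i < j) m %/ 16 ^ (j.+1 - widen_ord (leqnSn j) i) =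
          \sum_(i < j) (m %/ 16) %/ 16 ^ (j - i).
  by apply: eq_bigr => i _; rewrite /= subSn 1?ltnW // expnS divnMA.
by have := IH (m %/ 16); have := leq_divM m 16; lia.
Qed.

(* Each new set contributes at least [3m/4 - m/15 > m/2] new elements. *)
Lemma card_bigcup_geometric (B : finType) m t (U : nat -> {set B}) :
  (forall j, j < t -> 3 * m <= 4 * #|U j|) ->
  (forall i j, i < j < t -> #|U j :&: U i| <= m %/ 16 ^ (j - i)) ->
  t * m <= 2 * #|\bigcup_(j < t) U j|.
Proof.
move=> card_U meet_U; elim: t card_U meet_U => [|t IH] card_U meet_U.
  by rewrite mul0n.
rewrite mulSn big_ord_recr /= cardsU.
have old : t * m <= 2 * #|\bigcup_(j < t) U j|.
  apply: IH => [j lt_j | i j /andP [lt_ij lt_j]]; first exact: card_U (ltnW lt_j).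
  by apply: meet_U; rewrite lt_ij ltnS ltnW.
have new := card_U t (ltnSn t).
have le_meet : #|(\bigcup_(j < t) U j) :&: U t| <= \sum_(i < t) m %/ 16 ^ (t - i).
  rewrite setIC (big_morph _ (setIUr (U t)) (setI0 (U t))).
  apply: leq_trans (card_bigcup_le _ _ _) _; apply: leq_sum => i _.
  by apply: meet_U; rewrite ltn_ord ltnSn.
have := sum_div_pow16 t m; have := subset_leq_card (subsetIr (\bigcup_(j < t) U j) (U t)).
move: old new le_meet; set V := #|\bigcup_(j < t) U j|; set I := #|_ :&: U t|.
set S := \sum_(i < t) _; set W := #|U t|; lia.
Qed.

Lemma card_bseq_bool_lt L : #|{bseq L of bool}| < 2 ^ L.+1.
Proof.
rewrite card_bseq card_bool -(big_mkord xpredT (expn 2)).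
elim: L => [|L IH]; first by rewrite big_nat1.
rewrite big_nat_recr //=; move: IH; rewrite !expnS.
by set s := \sum_(_ <= _ < _) _; lia.
Qed.

Lemma mul_div_le a b m : 0 < b -> a * (m %/ (a * b)) <= m %/ b.
Proof. by move=> b_gt0; rewrite leq_divRL // mulnAC mulnC leq_divM. Qed.

Section SchemeOnCombs.

Variables (n : nat) (n_gt0 : 0 < n) (S : scheme n).
Hypothesis S_ok : binary_routing_scheme S.

Lemma comb_scheme_coding k (k_gt0 : 0 < k) L :
  3 * k <= n -> (forall u, size (enc_lab S (comb_tree n_gt0 k_gt0) u) <= L) ->
  let g u := insub_bseq L (enc_lab S (comb_tree n_gt0 k_gt0) u) in
  {in teeth n k &, injective g} /\ residue_coding k g (fun a b => linked (dec S) a b).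
Proof.
move=> le_3k_n size_lab g.
have [ports_ok routing_ok] := S_ok (comb_tree_binary n_gt0 k_gt0).
have val_g u : val (g u) = enc_lab S (comb_tree n_gt0 k_gt0) u.
  by rewrite /g /insub_bseq insubdK //; apply: size_lab.
split=> [u w tu tw /(congr1 val) | u w tu tw neq_uw].
  by rewrite !val_g; apply: (comb_lab_inj ports_ok routing_ok).
by rewrite !val_g; apply: (comb_linkedE ports_ok routing_ok).
Qed.

Lemma pow16_gt0 j : 0 < 16 ^ j.+1.
Proof. by rewrite expn_gt0. Qed.

Definition comb16 j : rtree n := comb_tree n_gt0 (pow16_gt0 j).

Lemma comb16_label_bound t L : 4 * 16 ^ t <= n ->
  (forall j, j < t -> forall u, size (enc_lab S (comb16 j) u) <= L) ->
  t * n < 4 * 2 ^ L.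
Proof.
move=> le_n size_lab.
pose g j u := insub_bseq L (enc_lab S (comb16 j) u).
pose U j := g j @: teeth n (16 ^ j.+1).
have le_4k j : j < t -> 4 * 16 ^ j.+1 <= n.
  by move=> lt_j; apply: leq_trans le_n; rewrite leq_mul2l leq_exp2l.
have coding j : j < t -> {in teeth n (16 ^ j.+1) &, injective (g j)} /\
    residue_coding (16 ^ j.+1) (g j) (fun a b => linked (dec S) a b).
  move=> lt_j; apply: comb_scheme_coding (size_lab j lt_j).
  by have := le_4k j lt_j; lia.
have card_U j : j < t -> 3 * n <= 4 * #|U j|.
  move=> lt_j; rewrite card_in_imset; last exact: (coding j lt_j).1.
  have := card_teeth n (16 ^ j.+1); have := le_4k j lt_j.
  by set c := #|teeth _ _|; lia.
have meet_U i j : i < j < t -> #|U j :&: U i| <= n %/ 16 ^ (j - i).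
  move=> /andP [lt_ij lt_j]; have lt_i := ltn_trans lt_ij lt_j.
  rewrite setIC; apply: leq_trans (residue_coding_meet (pow16_gt0 i) (pow16_gt0 j)
    (coding i lt_i).2 (coding j lt_j).2) _.
  by rewrite (_ : j.+1 = i.+1 + (j - i)) 1?expnD ?mul_div_le ?expn_gt0 //; lia.
have := card_bigcup_geometric card_U meet_U.
have := leq_ltn_trans (max_card (mem (\bigcup_(j < t) U j))) (card_bseq_bool_lt L).
by rewrite expnS; set V := #|_|; lia.
Qed.

End SchemeOnCombs.

Lemma trunc_log2_lt_log16 n : 4 <= n -> trunc_log 2 n < 4 * trunc_log 16 (n %/ 4) + 6.
Proof.
move=> le_4n; set p := trunc_log 2 n; set t := trunc_log 16 (n %/ 4).
have le_2p_n : 2 ^ p <= n by apply: trunc_logP; lia.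
have lt_t : n %/ 4 < 2 ^ (4 * t.+1) by rewrite expnM; apply: trunc_log_ltn.
have [lt_p2 | le_2p] := ltnP p 2; first by lia.
have : 2 ^ (p - 2) < 2 ^ (4 * t.+1).
  apply: leq_ltn_trans lt_t; rewrite leq_divRL // -[4]/(2 ^ 2) -expnD subnK //.
by rewrite ltn_exp2l //; lia.
Qed.

(* Squaring gives t^2 4^p < 16 4^L, and t^2 >= 64 (p + 1) once t >= 274. *)
Lemma label_length_arith p t L : 1100 <= p -> p < 4 * t + 6 ->
  t * 2 ^ p < 4 * 2 ^ L -> p.+1 * 4 ^ p.+1 <= 4 ^ L.
Proof.
move=> le_p lt_p lt_L.
have -> : 4 ^ p.+1 = 4 * (2 ^ p * 2 ^ p) by rewrite -expnMn -[4]/(2 * 2) expnS.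
have -> : 4 ^ L = 2 ^ L * 2 ^ L by rewrite -expnMn.
have sq_lt : (t * 2 ^ p) * (t * 2 ^ p) < (4 * 2 ^ L) * (4 * 2 ^ L) by apply: ltn_mul.
move: sq_lt; set A := 2 ^ p; set B := 2 ^ L => sq_lt.
have le_tt : 64 * p.+1 <= t * t by nia.
nia.
Qed.

Lemma INR_expn m q : INR (m ^ q) = (INR m ^ q)%R.
Proof. by elim: q => [|q IH]; rewrite ?expn0 // expnS mulnE mult_INR IH. Qed.

Lemma ln2_gt0 : (0 < ln 2)%R.
Proof. by rewrite -ln_1; apply: ln_increasing; lra. Qed.

Lemma log2_le x y : (0 < x)%R -> (x <= y)%R -> (log2 x <= log2 y)%R.
Proof.
move=> x_gt0 [lt_xy | ->]; last lra.
apply: Rmult_le_compat_r; first exact/Rlt_le/Rinv_0_lt_compat/ln2_gt0.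
exact/Rlt_le/ln_increasing.
Qed.

Lemma log2_mul x y : (0 < x)%R -> (0 < y)%R -> log2 (x * y) = (log2 x + log2 y)%R.
Proof. by move=> x_gt0 y_gt0; rewrite /log2 ln_mult //; lra. Qed.

Lemma log2_pow x q : (0 < x)%R -> log2 (x ^ q) = (INR q * log2 x)%R.
Proof. by move=> x_gt0; rewrite /log2 ln_pow //; lra. Qed.

Lemma log2_2 : log2 2 = 1%R.
Proof. by rewrite /log2; field; apply/Rgt_not_eq/ln2_gt0. Qed.

Lemma log2_4 : log2 4 = 2%R.
Proof. by rewrite (_ : 4 = 2 * 2)%R ?log2_mul ?log2_2; lra. Qed.

Lemma log2_loglog_bound n q L : 2 <= n -> n <= 2 ^ q -> q * 4 ^ q <= 4 ^ L ->
  (log2 (INR n) + / 2 * log2 (log2 (INR n)) <= INR L)%R.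
Proof.
move=> le_2n le_n_2q le_4L.
have q_gt0 : 0 < q.
  by have [q0 | //] := posnP q; move: le_n_2q; rewrite q0 expn0; lia.
have n_ge2 : (2 <= INR n)%R by apply/(le_INR 2)/leP.
have q_pos : (0 < INR q)%R by apply/lt_0_INR/ltP.
have log_n_ge1 : (1 <= log2 (INR n))%R by rewrite -log2_2; apply: log2_le; lra.
have log_n_le : (log2 (INR n) <= INR q)%R.
  rewrite -[INR q]Rmult_1_r -log2_2 -log2_pow; last lra.
  by apply: log2_le; [lra | rewrite -[2%R]/(INR 2) -INR_expn; apply/le_INR/leP].
have loglog_le : (log2 (log2 (INR n)) <= log2 (INR q))%R by apply: log2_le; lra.
have key : (log2 (INR q) + 2 * INR q <= 2 * INR L)%R.
  have pow4_gt0 m : (0 < 4 ^ m)%R by apply: pow_lt; lra.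
  have le_R : (INR q * 4 ^ q <= 4 ^ L)%R.
    have -> : 4%R = INR 4 by rewrite /=; lra.
    by rewrite -!INR_expn -mult_INR; apply/le_INR/leP.
  have := log2_le (Rmult_lt_0_compat _ _ q_pos (pow4_gt0 q)) le_R.
  by rewrite log2_mul // !log2_pow ?log2_4; lra.
lra.
Qed.

Theorem mainTheorem9 :
  exists c : R, (0 < c)%R /\
  exists N : nat, forall n : nat, N <= n ->
    forall S : scheme n, binary_routing_scheme S ->
      exists T : rtree n, binary_tree T /\
        exists u : 'I_n,
          (log2 (INR n) + c * log2 (log2 (INR n)) <= INR (size (enc_lab S T u)))%R.
Proof.
exists (/ 2)%R; split; first lra.
exists (2 ^ 1100) => n le_n S S_ok.
have n_gt0 : 0 < n by apply: leq_trans le_n; rewrite expn_gt0.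
set p := trunc_log 2 n; set t := trunc_log 16 (n %/ 4).
have le_p : 1100 <= p by apply: trunc_log_max.
have le_2p_n : 2 ^ p <= n by apply: trunc_logP.
have lt_p : p < 4 * t + 6 by apply: trunc_log2_lt_log16; lia.
have le_t : 4 * 16 ^ t <= n.
  by rewrite mulnC -leq_divRL //; apply: trunc_logP; rewrite // divn_gt0 //; lia.
(* The witness is a node with a longest label over the combs with spines 16^(j+1), j < t. *)
pose F (x : 'I_t * 'I_n) := size (enc_lab S (comb16 n_gt0 x.1) x.2).
have [x0 max_F] : {x0 | \max_x F x = F x0}.
  by apply: eq_bigmax; rewrite card_prod !card_ord muln_gt0 n_gt0 andbT; lia.
exists (comb16 n_gt0 x0.1); split; first exact: comb_tree_binary.
exists x0.2; rewrite -/(F x0) -max_F.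
apply: (@log2_loglog_bound _ p.+1); [lia | exact: ltnW (trunc_log_ltn _ _) |].
apply: (label_length_arith le_p lt_p).
apply: leq_ltn_trans (comb16_label_bound S_ok le_t _); first by rewrite leq_mul2l le_2p_n orbT.
by move=> j lt_j u; apply: (@leq_bigmax _ F (Ordinal lt_j, u)).
Qed.
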